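(* For all $[a,b],[c,d]\in\mathcal W$ (all equations below in $\mathbb Z_r$, $\mathbb 1$ the indicator function): (i) $[W_{[a,b]}\otimes W_{[c,d]}:U_{a'}]=\mathbb 1_{a+c=a',\,b+d=a'}+\mathbb 1_{a+d=a',\,b+c=a'}$; (ii) $[W_{[a,b]}\otimes W_{[c,d]}:V_{b'}]=\mathbb 1_{a+b+c+d=2b'}+\mathbb 1_{a+c=b',\,b+d=b'}+\mathbb 1_{a+d=b',\,b+c=b'}$; (iii) $[W_{[a,b]}\otimes W_{[c,d]}:W_{[c',d']}]=\mathbb 1_{a+b+c+d=c'+d'}+\mathbb 1_{a+c=c',\,b+d=d'}+\mathbb 1_{a+c=d',\,b+d=c'}+\mathbb 1_{a+d=c',\,b+c=d'}+\mathbb 1_{a+d=d',\,b+c=c'}$; (iv) $[W_{[a,b]}\otimes W_{[c,d]}:X_{[n']}]=\mathbb 1_{a+b+c+d=\overline{n'}}$.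
   Context: Let $q=p^\ell$ be a prime power, $G=\mathrm{GL}_2(q)=\mathrm{GL}_2(\mathbb{F}_q)$, $r=q-1$, $s=q+1$, $\mathbb{Z}_n=\mathbb{Z}/n\mathbb{Z}$. Fix a generator $\rho$ of $\mathbb{F}_q^\times$ and a generator $\sigma$ of $\mathbb{F}_{q^2}^\times$ with $\sigma^s=\rho$. For $a\in\mathbb{Z}_r$ let $\alpha_a:\mathbb{F}_q^\times\to\mathbb{C}^\times$, $\alpha_a(\rho^j)=e^{2\pi i aj/r}$; for $n\in\mathbb{Z}_{rs}$ let $\phi_n:\mathbb{F}_{q^2}^\times\to\mathbb{C}^\times$, $\phi_n(\sigma^j)=e^{2\pi i nj/(rs)}$; $\bar n\in\mathbb{Z}_r$ denotes the reduction of $n$ modulo $r$. Let $\mathcal W$ be the set of unordered pairs $[a,b]=\{a,b\}$ with $a\ne b$ in $\mathbb{Z}_r$, and $\mathcal X$ the set of classes $[n]$ of elements $n\in\mathbb{Z}_{rs}$ with $n\not\equiv0\pmod s$ under the equivalence $n\sim qn$. The conjugacy classes of $G$ are: $c_1(k)$ ($k\in\mathbb Z_r$) containing $\rho^kI$; $c_2(k)$ ($k\in\mathbb Z_r$) containing $\begin{pmatrix}\rho^k&0\\1&\rho^k\end{pmatrix}$; $c_3([k,\ell])$ ($[k,\ell]\in\mathcal W$) containing $\mathrm{diag}(\rho^k,\rho^\ell)$; $c_4([m])$ ($[m]\in\mathcal X$) consisting of the matrices with eigenvalues $\sigma^m,\sigma^{qm}$ in $\mathbb{F}_{q^2}$.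 Up to isomorphism the irreducible complex representations of $G$ are exactly the following (pairwise non-isomorphic for distinct parameters), given by their character values on $(c_1(k),c_2(k),c_3([k,\ell]),c_4([m]))$: $U_a$, $a\in\mathbb Z_r$, dimension $1$: $(\alpha_a(\rho^{2k}),\alpha_a(\rho^{2k}),\alpha_a(\rho^{k+\ell}),\alpha_a(\rho^{m}))$ (i.e. $U_a=\alpha_a\circ\det$); $V_a$, $a\in\mathbb Z_r$, dimension $q$: $(q\alpha_a(\rho^{2k}),0,\alpha_a(\rho^{k+\ell}),-\alpha_a(\rho^m))$; $W_{[a,b]}$, $[a,b]\in\mathcal W$, dimension $s$: $(s\alpha_{a+b}(\rho^k),\alpha_{a+b}(\rho^k),\alpha_a(\rho^k)\alpha_b(\rho^\ell)+\alpha_a(\rho^\ell)\alpha_b(\rho^k),0)$; $X_{[n]}$, $[n]\in\mathcal X$, dimension $r$: $(r\alpha_{\bar n}(\rho^k),-\alpha_{\bar n}(\rho^k),0,-(\phi_n(\sigma^m)+\phi_n(\sigma^{qm})))$. Tensor products $\pi_1\otimes\pi_2$ of $G$-representations carry the diagonal $G$-action, and for $\pi_3$ irreducible, $[\pi_1\otimes\pi_2:\pi_3]=\dim\mathrm{Hom}_G(\pi_1\otimes\pi_2,\pi_3)$. *)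

From HB Require Import structures.
From mathcomp Require Import all_boot all_order all_algebra all_fingroup all_field all_character.
Set Implicit Arguments. Unset Strict Implicit. Unset Printing Implicit Defensive.
Import GRing.Theory Num.Theory.
Local Open Scope ring_scope.

(* zeta n = e^{2 pi i / n} in algC: n.-root (-1) is the n-th root of -1 of
   minimal nonnegative argument, i.e. e^{i pi / n}. *)
Definition zeta (n : nat) : algC := (n.-root (-1)) ^+ 2.

Definition ind (b : bool) : algC := if b then 1 else 0.

Section GL2.
Variables (F L : finFieldType) (iota : {rmorphism F -> L}) (rho : F) (sigma : L).

Definition qq : nat := #|F|.
Definition rr : nat := (#|F|.-1)%N.
Definition ss : nat := (#|F|.+1)%N.

Definition logF (x : F) : nat :=
  if [pick k : 'I_rr | rho ^+ k == x] is Some k then val k else 0%N.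

(* conjugacy-class parameter of an element of GL_2(q):
   C1 k : rho^k I ; C2 k : non-scalar with double eigenvalue rho^k ;
   C3 k l : eigenvalues rho^k <> rho^l in F ; C4 m : eigenvalues sigma^m,
   sigma^(qm) in L = F_{q^2} not in F. *)
Inductive gl2class := C1 of nat | C2 of nat | C3 of nat & nat | C4 of nat.

Definition classify (g : 'M[F]_2) : gl2class :=
  let t := \tr g in let d := \det g in
  if g == (g ord0 ord0)%:M then C1 (logF (g ord0 ord0)) else
  match [pick x : F | x ^+ 2 - t * x + d == 0] with
  | Some x => if x == t - x then C2 (logF x) else C3 (logF x) (logF (t - x))
  | None =>
      C4 (if [pick m : 'I_(rr * ss) |
                (sigma ^+ m) ^+ 2 - iota t * sigma ^+ m + iota d == 0]
          is Some m then val m else 0%N)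
  end.

(* alpha_a(rho^j) and phi_n(sigma^j) *)
Definition alpha (a j : nat) : algC := zeta rr ^+ (a * j).
Definition phi (n j : nat) : algC := zeta (rr * ss) ^+ (n * j).

Definition chiU (a : nat) (g : 'M[F]_2) : algC :=
  match classify g with
  | C1 k => alpha a (2 * k) | C2 k => alpha a (2 * k)
  | C3 k l => alpha a (k + l) | C4 m => alpha a m end.

Definition chiV (a : nat) (g : 'M[F]_2) : algC :=
  match classify g with
  | C1 k => qq%:R * alpha a (2 * k) | C2 k => 0
  | C3 k l => alpha a (k + l) | C4 m => - alpha a m end.

Definition chiW (a b : nat) (g : 'M[F]_2) : algC :=
  match classify g with
  | C1 k => ss%:R * alpha (a + b) k | C2 k => alpha (a + b) k
  | C3 k l => alpha a k * alpha b l + alpha a l * alpha b k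
  | C4 m => 0 end.

Definition chiX (n : nat) (g : 'M[F]_2) : algC :=
  match classify g with
  | C1 k => rr%:R * alpha (n %% rr) k | C2 k => - alpha (n %% rr) k
  | C3 k l => 0
  | C4 m => - (phi n m + phi n (qq * m)) end.

End GL2.

(* multiplicity [pi1 (x) pi2 : pi3] computed as the character inner product
   <chi1 chi2, chi3>_G on G = GL_2(F) *)
Definition mult (F : finFieldType) (chi1 chi2 chi3 : 'M[F]_2 -> algC) : algC :=
  (#|[set: {'GL_2[F]}]|%:R)^-1 *
  \sum_(g : {'GL_2[F]}) chi1 (GLval g) * chi2 (GLval g) * (chi3 (GLval g))^*.

From HB Require Import structures.
From mathcomp Require Import all_boot all_order all_algebra all_fingroup all_field all_character.
From mathcomp Require Import ring lra zify.
Set Implicit Arguments. Unset Strict Implicit. Unset Printing Implicit Defensive.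
Import GRing.Theory Num.Theory Order.TTheory.
Local Open Scope ring_scope.

(* The characters are class functions and W vanishes on the elliptic classes, so the inner
   product is a sum over ordered pairs (x, y) of eigenvalues in F^x: q^2 matrices have the double
   eigenvalue x (one of them scalar) and q^2 + q have the distinct eigenvalues x, y.  Writing
   x = rho^k, y = rho^l, every product of character values is a sum of monomials
   zeta^(u k + v l), and the sums over k and l collapse by sum_k zeta^(u k) = r [r | u].
   This needs zeta r to be a primitive r-th root of unity: the n-th roots of -1 form a coset of
   <w^2>, w = n.-root (-1), and the one of largest real part is w or its conjugate, since its
   neighbours u w^2 and u w^-2 have no larger real part; so w generates all 2n-th roots. *)

Lemma rotation_max_cos_le (R : realFieldType) (p q c s : R) :
    c ^+ 2 + s ^+ 2 = 1 -> p ^+ 2 + q ^+ 2 = 1 -> 0 <= s -> c != 1 ->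
    p * (c ^+ 2 - s ^+ 2) - 2 * q * c * s <= p ->
    p * (c ^+ 2 - s ^+ 2) + 2 * q * c * s <= p ->
  c <= p.
Proof.
move=> cs1 pq1 s_ge0 c_neq1 le_p1 le_p2.
have [s0|s_neq0] := eqVneq s 0.
  have : (c - 1) * (c + 1) = (c ^+ 2 + s ^+ 2) - 1 - s ^+ 2 by ring.
  rewrite cs1 s0 subrr expr0n sub0r oppr0 => /eqP.
  rewrite mulf_eq0 subr_eq0 (negbTE c_neq1) addr_eq0 => /eqP ->; nra.
have s_gt0 : 0 < s by rewrite lt_def s_neq0.
(* With [u = p + i q], [w = c + i s]: since neither rotation of [u] by [w ^+ 2] or [w^* ^+ 2]
   increases its real part, [s p >= |c q|]. *)
have sp_cq : 0 <= p * s + q * c /\ 0 <= p * s - q * c.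
  have e : p * (c ^+ 2 - s ^+ 2) - p = - 2 * s * (p * s) + p * (c ^+ 2 + s ^+ 2 - 1) by ring.
  rewrite cs1 subrr mulr0 addr0 in e.
  have h1 : 0 <= 2 * s * (p * s + q * c) by lra.
  have h2 : 0 <= 2 * s * (p * s - q * c) by lra.
  by split; rewrite -(pmulr_rge0 _ (_ : 0 < 2 * s)) //; lra.
case: sp_cq => sp_cq1 sp_cq2.
have p_ge0 : 0 <= p by rewrite -(pmulr_lge0 _ s_gt0); lra.
have [c_le0|c_gt0] := lerP c 0; first lra.
have qc : (q * c) ^+ 2 <= (p * s) ^+ 2 by nra.
have : c ^+ 2 <= p ^+ 2.
  have ec : c ^+ 2 = (q * c) ^+ 2 + p ^+ 2 * c ^+ 2 by rewrite -[LHS]mul1r -pq1; ring.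
  have ep : p ^+ 2 = (p * s) ^+ 2 + p ^+ 2 * c ^+ 2 by rewrite -[LHS]mulr1 -cs1; ring.
  lra.
nra.
Qed.

Lemma Re_le_of_rotation_max (u w : algC) :
    `|u| = 1 -> `|w| = 1 -> 0 <= 'Im w -> w != 1 ->
    'Re (u * w ^+ 2) <= 'Re u -> 'Re (u * w^* ^+ 2) <= 'Re u ->
  'Re w <= 'Re u.
Proof.
move=> u1 w1 Imw_ge0 w_neq1.
have norm1 (z : algC) : `|z| = 1 -> 'Re z ^+ 2 + 'Im z ^+ 2 = 1.
  by rewrite -normC2_Re_Im => ->; rewrite expr1n.
have ReM_rot (z : algC) :
    'Re (u * z ^+ 2) = 'Re u * ('Re z ^+ 2 - 'Im z ^+ 2) - 2 * 'Im u * 'Re z * 'Im z.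
  by rewrite !expr2 !ReM !ImM; ring.
rewrite !ReM_rot !Re_conj !Im_conj sqrrN mulrN addrC opprK => le2 le1.
pose P := in_algR (Creal_Re u); pose Q := in_algR (Creal_Im u).
pose C := in_algR (Creal_Re w); pose S := in_algR (Creal_Im w).
have valE (x y : algR) : (x <= y) = (algRval x <= algRval y) by [].
apply: (@rotation_max_cos_le algR P Q C S).
- by apply: val_inj; rewrite /= -!expr2 norm1.
- by apply: val_inj; rewrite /= -!expr2 norm1.
- by [].
- apply: contraNneq w_neq1 => /(congr1 val) /= Rew1.
  have /eqP : 'Im w ^+ 2 = 0 by apply: (@addrI _ 1); rewrite addr0 -{1}(expr1n _ 2) -Rew1 norm1.
  by rewrite sqrf_eq0 => /eqP Imw0; rewrite [w]Crect Rew1 Imw0 mulr0 addr0.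
- by rewrite valE !(rmorphB, rmorphM, rmorphXn, rmorph_nat) addrC.
- by rewrite valE !(rmorphB, rmorphD, rmorphM, rmorphXn, rmorph_nat).
Qed.

Lemma prim_root_of_exp (R : idomainType) N (xi w : R) i :
  N.-primitive_root xi -> w ^+ N = 1 -> xi = w ^+ i -> N.-primitive_root w.
Proof.
move=> xi_prim wN xiE; have N_gt0 := prim_order_gt0 xi_prim.
have [m w_prim m_dvd_N] := prim_order_exists N_gt0 wN.
suff /eqP <- : m == N by [].
rewrite eqn_dvd m_dvd_N (prim_order_dvd xi_prim) xiE -exprM mulnC exprM.
by rewrite (prim_expr_order w_prim) expr1n eqxx.
Qed.

Lemma prim_root_half_expr (R : idomainType) n (xi : R) :
  (2 * n).-primitive_root xi -> xi ^+ n = -1.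
Proof.
move=> xi_prim; have n_gt0 : (0 < n)%N by have := prim_order_gt0 xi_prim; rewrite muln_gt0.
have /eqP := prim_expr_order xi_prim; rewrite mulnC exprM sqrf_eq1 => /orP[] /eqP // xin1.
have : (2 * n %| n)%N by rewrite (prim_order_dvd xi_prim) xin1.
by move/(dvdn_leq n_gt0); lia.
Qed.

Lemma eqC_Re_norm (u w : algC) : `|u| = `|w| -> 'Re u = 'Re w -> u = w \/ u = w^*.
Proof.
move=> normE ReE; have [Im_ge0|Im_lt0] := boolP (0 <= 'Im u * 'Im w).
  by left; apply: eqC_semipolar.
right; apply: eqC_semipolar; rewrite ?norm_conjC ?Re_conj // Im_conj mulrN oppr_ge0 ltW //.
by rewrite real_ltNge ?rpredM ?Creal_Im.
Qed.

Lemma exists_Re_max (I : finType) (i0 : I) (f : I -> algC) :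
  exists i, forall j, 'Re (f j) <= 'Re (f i).
Proof.
pose g i : algR := in_algR (Creal_Re (f i)).
by exists (Order.arg_max i0 xpredT g); case: arg_maxP => // i _ g_max j; apply: g_max.
Qed.

Lemma rootCN1_prim n : (1 < n)%N -> (2 * n).-primitive_root (n.-root (-1 : algC)).
Proof.
move=> n_gt1; have n_gt0 := ltnW n_gt1; set w := n.-root (-1).
have twon_gt0 : (0 < 2 * n)%N by rewrite muln_gt0.
have wn : w ^+ n = -1 by rewrite rootCK.
have w2n : w ^+ (2 * n) = 1 by rewrite mulnC exprM wn sqrrN expr1n.
have norm1 (z : algC) : z ^+ n = -1 -> `|z| = 1.
  by move=> zn; apply/eqP; rewrite -(pexpr_eq1 n_gt0) // -normrX zn normrN1.
have w_neq1 : w != 1.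
  by apply/eqP => w1; move/eqP: wn; rewrite w1 expr1n -addr_eq0 -mulr2n pnatr_eq0.
have w0 : w != 0 by rewrite -normr_eq0 (norm1 _ wn) oner_eq0.
have wV : w^* = w ^+ (2 * n).-1.
  by apply: (mulIf w0); rewrite -exprSr prednK // w2n mulrC -normCK norm1 // expr1n.
have [xi xi_prim] := C_prim_root_exists twon_gt0.
have xin := prim_root_half_expr xi_prim.
(* The roots of [z ^+ n = -1] are the [xi * w ^+ (2 * j)]; [u] has maximal real part among them. *)
have [k k_max] := exists_Re_max (Ordinal n_gt0) (fun j => xi * w ^+ (2 * j)).
set u := xi * w ^+ (2 * k) in k_max.
have u_max j : 'Re (xi * w ^+ (2 * j)) <= 'Re u.
  rewrite (divn_eq j n) mulnDr exprD [(2 * _)%N]mulnCA exprM exprAC w2n expr1n mul1r.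
  exact: (k_max (Ordinal (ltn_pmod j n_gt0))).
have un : u ^+ n = -1 by rewrite exprMn xin -exprM mulnAC exprM w2n expr1n mulr1.
have Reu : 'Re u = 'Re w.
  apply/eqP; rewrite eq_le; apply/andP; split.
    have [Imu_ge0|Imu_lt0] := boolP (0 <= 'Im u); first exact: rootC_Re_max un Imu_ge0.
    rewrite -Re_conj; apply: (rootC_Re_max n_gt0); first by rewrite -rmorphXn un rmorphN1.
    by rewrite Im_conj oppr_ge0 ltW // real_ltNge ?Creal_Im.
  apply: Re_le_of_rotation_max; rewrite ?norm1 ?Im_rootC_ge0 //.
    by rewrite /u -mulrA -exprD -mulnSr u_max.
  by rewrite wV -exprM /u -mulrA -exprD [((2 * n).-1 * 2)%N]mulnC -mulnDr u_max.
have [j uE] : exists j, u = w ^+ j.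
  by case: (eqC_Re_norm (etrans (norm1 _ un) (esym (norm1 _ wn))) Reu) => ->;
    [exists 1%N; rewrite expr1 | exists (2 * n).-1].
apply: (prim_root_of_exp xi_prim w2n (i := (j + 2 * k * (2 * n).-1)%N)).
by rewrite exprD -uE /u -mulrA -exprD -mulnS prednK // exprM exprAC w2n expr1n mulr1.
Qed.

Lemma zeta_prim n : (1 < n)%N -> n.-primitive_root (zeta n).
Proof. by move=> n_gt1; have := exp_prim_root (rootCN1_prim n_gt1) 2; rewrite gcdnMr mulKn. Qed.

Section ZetaSums.
Variable r : nat.
Hypothesis r_gt1 : (1 < r)%N.
Local Notation z := (zeta r).

Let r_gt0 : (0 < r)%N. Proof. exact: ltnW. Qed.
Let z_prim : r.-primitive_root z. Proof. exact: zeta_prim. Qed.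

Definition zeta_sum (u : nat) : algC := \sum_(k < r) z ^+ (u * k).

Lemma zeta_sumE u : zeta_sum u = r%:R * ind (r %| u)%N.
Proof.
rewrite /zeta_sum /ind (prim_order_dvd z_prim).
under eq_bigr do rewrite exprM.
case: eqVneq => [->|zu_neq1].
  by rewrite (eq_bigr (fun=> 1)) => [|k _]; rewrite ?expr1n // sumr_const card_ord mulr1.
have : (z ^+ u - 1) * \sum_(k < r) (z ^+ u) ^+ k = 0.
  by rewrite -subrX1 -exprM mulnC exprM (prim_expr_order z_prim) expr1n subrr.
by rewrite mulr0 => /eqP; rewrite mulf_eq0 subr_eq0 (negbTE zu_neq1) => /eqP.
Qed.

Lemma conjC_zetaX m : (z ^+ m)^* = z ^+ (m * r.-1).
Proof.
have z_norm : `|z| = 1.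
  by apply/eqP; rewrite -(pexpr_eq1 r_gt0) // -normrX (prim_expr_order z_prim) normr1.
have z0 : z != 0 by rewrite -normr_eq0 z_norm oner_eq0.
have zV : z^* = z ^+ r.-1.
  apply: (mulIf z0); rewrite -exprSr prednK // (prim_expr_order z_prim).
  by rewrite mulrC -normCK z_norm expr1n.
have -> : (z ^+ m)^* = z^* ^+ m by rewrite rmorphXn.
by rewrite zV -exprM mulnC.
Qed.

Lemma zeta_sum_eqmod u c : zeta_sum (u + c * r.-1) = r%:R * ind (u == c %[mod r]).
Proof.
rewrite zeta_sumE /dvdn -[0%N](mod0n r) -(eqn_modDr c) add0n -addnA -mulnSr prednK //.
by rewrite addnC modnMDl.
Qed.

End ZetaSums.

Lemma sum_pred1 (T : finType) (t : T) (P : pred T) :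
  (\sum_(x : T) ((x == t) && P x) = P t)%N.
Proof. by rewrite (bigD1 t) //= eqxx big1 ?addn0 // => x /negbTE ->. Qed.

Lemma sum_pred2 (R : pzSemiRingType) (T : finType) (G : T -> R) (u v : T) :
  \sum_(x : T) ((x == u) || (x == v))%:R * G x = G u + (u != v)%:R * G v.
Proof.
rewrite (bigD1 u) //= eqxx mul1r; congr (_ + _).
have [->|uv] := eqVneq u v; first by rewrite mul0r big1 // => x /negbTE ->; rewrite mul0r.
rewrite (bigD1 v) 1?eq_sym //= eqxx orbT mul1r big1 ?addr0 //.
by move=> x /andP[/negbTE -> /negbTE ->]; rewrite mul0r.
Qed.

Section CharPolyCount.
Variable F : finFieldType.
Local Notation q := #|F|.

Definition mx2_of (t : F * F * F * F) : 'M[F]_2 :=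
  \matrix_(i < 2, j < 2)
    if i == 0 then (if j == 0 then t.1.1.1 else t.1.1.2) else (if j == 0 then t.1.2 else t.2).

Definition entries2 (M : 'M[F]_2) : F * F * F * F := (M 0 0, M 0 1, M 1 0, M 1 1).

Lemma mx2_ofK : cancel mx2_of entries2.
Proof. by case=> [[[a b] c] d]; rewrite /entries2 !mxE. Qed.

Lemma entries2K : cancel entries2 mx2_of.
Proof.
move=> M; apply/matrixP => i j; rewrite mxE.
by case: i => [[|[|i]] Hi]; case: j => [[|[|j]] Hj] //=; congr (M _ _); apply: val_inj.
Qed.

Lemma mxtrace2 (M : 'M[F]_2) : \tr M = M 0 0 + M 1 1.
Proof. by rewrite /mxtrace !big_ord_recl big_ord0 addr0; congr (_ + M _ _); apply: val_inj. Qed.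

Lemma det_mx2 (M : 'M[F]_2) : \det M = M 0 0 * M 1 1 - M 0 1 * M 1 0.
Proof.
rewrite (expand_det_row _ 0) !big_ord_recl big_ord0 addr0 /cofactor !det_mx11 !mxE /=.
rewrite !expr0 !mul1r expr1 mulN1r mulrN.
by congr (M _ _ * M _ _ - M _ _ * M _ _); apply: val_inj.
Qed.

Lemma mx2_ofE a b c d :
  \tr (mx2_of (a, b, c, d)) = a + d /\ \det (mx2_of (a, b, c, d)) = a * d - b * c.
Proof. by rewrite mxtrace2 det_mx2 !mxE. Qed.

Lemma sum_mx2 (G : 'M[F]_2 -> nat) :
  (\sum_(M : 'M[F]_2) G M =
   \sum_(a : F) \sum_(b : F) \sum_(c : F) \sum_(d : F) G (mx2_of (a, b, c, d)))%N.
Proof.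
rewrite (reindex mx2_of) /=; last by exists entries2 => t _; [apply: mx2_ofK | apply: entries2K].
rewrite -(pair_big xpredT xpredT (fun t d => G (mx2_of (t, d)))) /=.
rewrite -(pair_big xpredT xpredT (fun t c => \sum_d G (mx2_of (t, c, d)))) /=.
by rewrite -(pair_big xpredT xpredT (fun a b => \sum_c \sum_d G (mx2_of (a, b, c, d)))).
Qed.

Lemma count_mul_eq (v : F) :
  (\sum_(b : F) \sum_(c : F) (b * c == v)%R = if v == 0%R then 2 * q - 1 else q - 1)%N.
Proof.
have q_gt0 : (0 < q)%N by apply/card_gt0P; exists 0.
rewrite (bigD1 0) //= (eq_bigr (fun=> nat_of_bool (v == 0))); last first.
  by move=> c _; rewrite mul0r eq_sym.
rewrite sum_nat_const (eq_bigr (fun=> 1%N)); last first.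
  move=> b b_neq0; transitivity (\sum_(c : F) ((c == b^-1 * v)%R && true))%N; last exact: sum_pred1.
  by apply: eq_bigr => c _; rewrite andbT -(can2_eq (mulKf b_neq0) (mulVKf b_neq0)).
rewrite sum1_card cardC1; change #|xpredT| with q.
by case: (v == 0) => /=; lia.
Qed.

Lemma count_charpoly2 (x y : F) :
  (\sum_(M : 'M[F]_2) ((x + y == \tr M) && (x * y == \det M))%R
     = if x == y then q * q else q * q + q)%N.
Proof.
rewrite sum_mx2.
have row_count a : (\sum_(b : F) \sum_(c : F) \sum_(d : F)
    ((x + y == \tr (mx2_of (a, b, c, d))) && (x * y == \det (mx2_of (a, b, c, d))))%R
    = (q - 1) + q * ((a == x) || (a == y)))%N.
  (* the trace fixes d, then the determinant fixes b * c *)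
  transitivity (\sum_(b : F) \sum_(c : F) (b * c == a * (x + y - a) - x * y)%R)%N.
    apply: eq_bigr => b _; apply: eq_bigr => c _.
    transitivity (\sum_(d : F)
      ((d == x + y - a) && (b * c == a * (x + y - a) - x * y))%R)%N; last exact: sum_pred1.
    apply: eq_bigr => d _; case: (mx2_ofE a b c d) => -> ->.
    have [->|d_neq] := eqVneq d (x + y - a).
      have -> : a + (x + y - a) = x + y by ring.
      by rewrite eqxx -subr_eq0 -[in RHS]subr_eq0; congr (_ == 0); ring.
    apply/eqP; rewrite eqb0; apply: contra d_neq => /andP[/eqP -> _]; apply/eqP; ring.
  rewrite count_mul_eq.
  have -> : a * (x + y - a) - x * y = - ((a - x) * (a - y)) by ring.
  by rewrite oppr_eq0 mulf_eq0 !subr_eq0; case: (_ || _) => /=; lia.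
rewrite (eq_bigr _ (fun a _ => row_count a)) big_split /= sum_nat_const -big_distrr /=.
have pair_count : (\sum_(a : F) ((a == x) || (a == y)) = (x != y).+1)%N.
  rewrite -card2 -sum1_card [RHS]big_mkcond; apply: eq_bigr => a _.
  by rewrite !inE; case: (_ || _).
rewrite pair_count; change #|xpredT| with q.
by case: eqVneq => _ /=; nia.
Qed.

End CharPolyCount.

Section ClassSums.
Variables (F L : finFieldType) (iota : {rmorphism F -> L}) (rho : F) (sigma : L).
Local Notation q := #|F|.
Local Notation classify := (classify iota rho sigma).

Definition C3_symmetric (f : gl2class -> algC) := forall k l, f (C3 k l) = f (C3 l k).

(* Contribution of the ordered eigenvalue pair [(x, y)] of [M]; a double eigenvalue is counted
   twice to match the two orderings of distinct eigenvalues. *)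
Definition eigen_value2 (h : gl2class -> algC) (M : 'M[F]_2) (x y : F) : algC :=
  if x == y then 2 * (if M == x%:M then h (C1 (logF rho x)) else h (C2 (logF rho x)))
  else h (C3 (logF rho x) (logF rho y)).

Lemma sum_vieta (t d x : F) (G : F -> algC) :
  \sum_(y : F) ((x + y == t) && (x * y == d))%:R * G y
    = (x ^+ 2 - t * x + d == 0)%:R * G (t - x).
Proof.
rewrite (bigD1 (t - x)) //= big1 ?addr0.
  have -> : x + (t - x) = t by ring.
  have -> : (x * (t - x) == d) = (x ^+ 2 - t * x + d == 0).
    by rewrite -subr_eq0 -oppr_eq0; congr (_ == 0); ring.
  by rewrite eqxx.
move=> y y_neq; have -> : (x + y == t) = false.
  by apply/negbTE; apply: contra y_neq => /eqP <-; apply/eqP; ring.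
by rewrite mul0r.
Qed.

Lemma classify_eigen_sum (h : gl2class -> algC) (h4 : forall m, h (C4 m) = 0)
    (h3 : C3_symmetric h) (M : 'M[F]_2) :
  2 * h (classify M) =
  \sum_(x : F) \sum_(y : F) ((x + y == \tr M) && (x * y == \det M))%:R * eigen_value2 h M x y.
Proof.
under eq_bigr do rewrite sum_vieta.
rewrite /classify /=; case: ifP => [M_scalar|M_nonscalar].
  set a := M ord0 ord0 in M_scalar *.
  rewrite (eqP M_scalar) mxtrace_scalar det_scalar.
  under eq_bigr => x _.
    have -> : x ^+ 2 - a *+ 2 * x + a ^+ 2 = (x - a) ^+ 2 by ring.
    by rewrite sqrf_eq0 subr_eq0 -[x == a]orbb over.
  rewrite sum_pred2 eqxx mul0r addr0 /eigen_value2.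
  have -> : a *+ 2 - a = a by ring.
  by rewrite eqxx -(eqP M_scalar) eqxx.
set t := \tr M; set d := \det M.
case: pickP => [x0 /eqP x0_root | no_root]; last first.
  by rewrite h4 mulr0 big1 // => x _; rewrite no_root mul0r.
have roots x : (x ^+ 2 - t * x + d == 0) = (x == x0) || (x == t - x0).
  have -> : x ^+ 2 - t * x + d = (x - x0) * (x - (t - x0)) + (x0 ^+ 2 - t * x0 + d) by ring.
  by rewrite x0_root addr0 mulf_eq0 !subr_eq0.
under eq_bigr do rewrite roots.
rewrite sum_pred2 /eigen_value2.
have M_neq z : (M == z%:M) = false.
  by apply/negbTE; apply: contraFN M_nonscalar => /eqP ->; rewrite mxE eqxx mulr1n.
have -> : t - (t - x0) = x0 by ring.
case: ifP => [/eqP <-|x0_neq]; first by rewrite eqxx M_neq mul0r addr0.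
by rewrite eq_sym x0_neq mul1r h3; ring.
Qed.

Lemma sum_GL2 (f : 'M[F]_2 -> algC) :
  \sum_(g : {'GL_2[F]}) f (GLval g) = \sum_(M : 'M[F]_2 | M \in unitmx) f M.
Proof.
symmetry; rewrite (reindex_omap (GLval : {'GL_2[F]} -> 'M[F]_2) insub); last first.
  by move=> M uM; rewrite insubT.
by apply: eq_bigl => g; rewrite (GL_unitmx g) /= valK eqxx.
Qed.

Lemma count_charpoly2C (x y : F) :
  \sum_(M : 'M[F]_2) ((x + y == \tr M) && (x * y == \det M))%:R
     = (if x == y then q * q else q * q + q)%:R :> algC.
Proof. by rewrite -count_charpoly2 natr_sum. Qed.

Lemma sum_GL2_class (h : gl2class -> algC) (h4 : forall m, h (C4 m) = 0)
    (h3 : C3_symmetric h) :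
  2 * \sum_(g : {'GL_2[F]}) h (classify (GLval g)) =
  \sum_(x : F) \sum_(y : F) (x * y != 0)%:R *
     (if x == y then 2 * (h (C1 (logF rho x)) + (q * q - 1)%:R * h (C2 (logF rho x)))
      else (q * q + q)%:R * h (C3 (logF rho x) (logF rho y))).
Proof.
rewrite mulr_sumr (sum_GL2 (fun M => 2 * h (classify M))).
under eq_bigr do rewrite classify_eigen_sum //.
rewrite exchange_big /=; apply: eq_bigr => x _.
rewrite exchange_big /=; apply: eq_bigr => y _.
have det_neq (M : 'M[F]_2) : (M \in unitmx) = (\det M != 0) by rewrite unitmxE unitfE.
have [xy0|xy_neq0] := eqVneq (x * y) 0.
  rewrite mul0r big1 // => M; rewrite det_neq xy0 eq_sym => /negbTE ->.
  by rewrite andbF mul0r.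
rewrite mul1r big_mkcond /=.
under eq_bigr => M _.
  have -> : (if M \in unitmx then ((x + y == \tr M) && (x * y == \det M))%:R * eigen_value2 h M x y
             else 0) = ((x + y == \tr M) && (x * y == \det M))%:R * eigen_value2 h M x y.
    by rewrite det_neq; case: eqP => [->|//] /=; rewrite (negbTE xy_neq0) andbF mul0r.
  over.
rewrite /eigen_value2; case: eqVneq => [<-|x_neq_y]; last first.
  by rewrite -mulr_suml count_charpoly2C (negbTE x_neq_y) mulrC.
(* among the matrices with double eigenvalue [x], only [x%:M] is scalar *)
under eq_bigr => M _.
  have -> : ((x + x == \tr M) && (x * x == \det M))%:R *
            (2 * (if M == x%:M then h (C1 (logF rho x)) else h (C2 (logF rho x)))) =
          ((x + x == \tr M) && (x * x == \det M))%:R * (2 * h (C2 (logF rho x)))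
          + (M == x%:M)%:R * (2 * (h (C1 (logF rho x)) - h (C2 (logF rho x)))).
    case: (eqVneq M x%:M) => [->|_]; last by rewrite mul0r addr0.
    by rewrite mxtrace_scalar det_scalar mulr2n expr2 !eqxx /=; ring.
  over.
rewrite big_split /= -mulr_suml count_charpoly2C eqxx (bigD1 x%:M) //= eqxx big1 ?addr0.
  rewrite mul1r natrB ?muln_gt0 ?andbb; last by apply/card_gt0P; exists 0.
  ring.
by move=> M /negbTE ->; rewrite mul0r.
Qed.

End ClassSums.

Section PrimRootReindex.
Variables (F : finFieldType) (rho : F).
Local Notation r := (rr F).
Hypothesis rho_prim : r.-primitive_root rho.

Lemma expr_prim_inj : injective (fun k : 'I_r => rho ^+ k).
Proof.
by move=> k l /eqP; rewrite (eq_prim_root_expr rho_prim) !modn_small // => /eqP /val_inj.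
Qed.

Lemma logF_expr (k : 'I_r) : logF rho (rho ^+ k) = k.
Proof. by rewrite /logF; case: pickP => [l /eqP /expr_prim_inj -> // | /(_ k)]; rewrite eqxx. Qed.

Lemma sum_units_prim_root (phi : F -> algC) :
  \sum_(x : F | x != 0) phi x = \sum_(k < r) phi (rho ^+ k).
Proof.
rewrite -(big_imset _ (in2W expr_prim_inj)) /=; apply: eq_bigl => x.
suff -> : [set rho ^+ (val k) | k : 'I_r] = [set~ 0] by rewrite !inE.
have rho_neq0 : rho != 0 by rewrite (prim_root_eq0 rho_prim) -lt0n (prim_order_gt0 rho_prim).
apply/eqP; rewrite eqEcard cardsC1 card_imset ?card_ord; last exact: expr_prim_inj.
rewrite leqnn andbT; apply/subsetP => _ /imsetP[k _ ->].
by rewrite !inE expf_neq0.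
Qed.

Lemma sum_units2_prim_root (G : F -> F -> algC) :
  \sum_(x : F) \sum_(y : F) (x * y != 0)%:R * G x y =
  \sum_(k < r) \sum_(l < r) G (rho ^+ k) (rho ^+ l).
Proof.
rewrite (bigID (fun x => x != 0)) /= [X in _ + X]big1 ?addr0; last first.
  by move=> x /negbNE /eqP ->; rewrite big1 // => y _; rewrite mul0r eqxx mul0r.
rewrite sum_units_prim_root; apply: eq_bigr => k _.
rewrite (bigID (fun y => y != 0)) /= [X in _ + X]big1 ?addr0; last first.
  by move=> y /negbNE /eqP ->; rewrite mulr0 eqxx mul0r.
rewrite sum_units_prim_root; apply: eq_bigr => l _.
have rho_neq0 : rho != 0 by rewrite (prim_root_eq0 rho_prim) -lt0n (prim_order_gt0 rho_prim).
by rewrite mulf_neq0 ?expf_neq0 // mul1r.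
Qed.

End PrimRootReindex.

Lemma sum_diag_split (R : zmodType) (I : finType) (A : I -> R) (B : I -> I -> R) :
  \sum_k \sum_l (if k == l then A k else B k l) =
  \sum_k A k + \sum_k \sum_l B k l - \sum_k B k k.
Proof.
rewrite -big_split -sumrB /=; apply: eq_bigr => k _.
rewrite (bigD1 k) //= eqxx [in RHS](bigD1 k) //=.
under eq_bigr => l l_neq do rewrite eq_sym (negbTE l_neq).
by rewrite addrCA [RHS]addrC addKr.
Qed.

Lemma ind_and (P R : bool) : ind (P && R) = ind P * ind R.
Proof. by case: P; case: R; rewrite /ind ?mul1r ?mul0r. Qed.

Section Multiplicities.
Variables (F L : finFieldType) (iota : {rmorphism F -> L}) (rho : F) (sigma : L).
Local Notation q := #|F|.
Local Notation Q := (#|F|%:R : algC).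
Local Notation r := (rr F).
Local Notation z := (zeta (rr F)).
Local Notation classify := (classify iota rho sigma).
Hypothesis rho_prim : r.-primitive_root rho.

Definition class_prod (f1 f2 f3 : gl2class -> algC) (cl : gl2class) : algC :=
  f1 cl * f2 cl * (f3 cl)^*.

Let q_gt0 : (0 < q)%N. Proof. by apply/card_gt0P; exists 0. Qed.

Lemma natr_rr : r%:R = Q - 1 :> algC. Proof. by rewrite /rr -subn1 natrB. Qed.
Lemma natr_ss : (ss F)%:R = Q + 1 :> algC. Proof. by rewrite /ss -addn1 natrD. Qed.

Lemma natr_q_neq0 : Q != 0. Proof. by rewrite pnatr_eq0 -lt0n. Qed.
Lemma natr_qS_neq0 : Q + 1 != 0. Proof. by rewrite -natr_ss pnatr_eq0. Qed.
Lemma natr_qB1_neq0 : Q - 1 != 0.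
Proof. by rewrite -natr_rr pnatr_eq0 -lt0n (prim_order_gt0 rho_prim). Qed.

Lemma mult_class_sum f1 f2 f3 :
    (forall m, f1 (C4 m) = 0) -> C3_symmetric f1 -> C3_symmetric f2 -> C3_symmetric f3 ->
    let H := class_prod f1 f2 f3 in
  mult (fun M => f1 (classify M)) (fun M => f2 (classify M)) (fun M => f3 (classify M)) =
  (2 * (Q * (Q - 1) ^+ 2 * (Q + 1)))^-1 *
  \sum_(k < r) \sum_(l < r)
     (if k == l then 2 * (H (C1 k) + (Q * Q - 1) * H (C2 k)) else (Q * Q + Q) * H (C3 k l)).
Proof.
move=> f1_C4 f1_sym f2_sym f3_sym H.
have H_C4 m : H (C4 m) = 0 by rewrite /H /class_prod f1_C4 !mul0r.
have H_sym : C3_symmetric H by move=> k l; rewrite /H /class_prod f1_sym f2_sym f3_sym.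
have := sum_GL2_class iota rho sigma H_C4 H_sym.
rewrite (sum_units2_prim_root rho_prim) => sumE.
rewrite /mult card_GL_2 -[\sum_g _](mulKf (_ : 2 != 0)) ?pnatr_eq0 // sumE.
rewrite [LHS]mulrA -invfM [_ * 2]mulrC; congr ((2 * _)^-1 * _).
  by rewrite -natr_rr -natr_ss !natrM expr2.
apply: eq_bigr => k _; apply: eq_bigr => l _.
rewrite (eq_prim_root_expr rho_prim) !modn_small // !(logF_expr rho_prim).
by rewrite natrB ?muln_gt0 ?q_gt0 // natrD !natrM.
Qed.

Hypothesis r_gt1 : (1 < r)%N.

Lemma mult_monomial f1 f2 f3 (e : nat) (A B : algC) (s : seq (nat * nat)) :
    (forall m, f1 (C4 m) = 0) -> C3_symmetric f1 -> C3_symmetric f2 -> C3_symmetric f3 ->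
    let H := class_prod f1 f2 f3 in
    (forall k, H (C1 k) = A * z ^+ (e * k)) -> (forall k, H (C2 k) = B * z ^+ (e * k)) ->
    (forall k l, H (C3 k l) = \sum_(p <- s) z ^+ (p.1 * k) * z ^+ (p.2 * l)) ->
    all (fun p => p.1 + p.2 == e)%N s ->
  mult (fun M => f1 (classify M)) (fun M => f2 (classify M)) (fun M => f3 (classify M)) =
  (2 * (Q * (Q - 1) ^+ 2 * (Q + 1)))^-1 *
  ((2 * (A + (Q * Q - 1) * B) - (Q * Q + Q) * (size s)%:R) * zeta_sum r e
   + (Q * Q + Q) * \sum_(p <- s) zeta_sum r p.1 * zeta_sum r p.2).
Proof.
move=> f1_C4 f1_sym f2_sym f3_sym H HC1 HC2 HC3 /allP diagE.
rewrite mult_class_sum // sum_diag_split; congr (_ * _).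
have -> : \sum_(k < r) 2 * (H (C1 k) + (Q * Q - 1) * H (C2 k))
          = 2 * (A + (Q * Q - 1) * B) * zeta_sum r e.
  by rewrite /zeta_sum mulr_sumr; apply: eq_bigr => k _; rewrite HC1 HC2; ring.
have -> : \sum_(k < r) (Q * Q + Q) * H (C3 k k) = (Q * Q + Q) * (size s)%:R * zeta_sum r e.
  rewrite /zeta_sum mulr_sumr; apply: eq_bigr => k _; rewrite HC3 -mulrA; congr (_ * _).
  rewrite (eq_big_seq (fun=> z ^+ (e * k))) => [|p /diagE /eqP <-]; last by rewrite -exprD mulnDl.
  by rewrite big_const_seq count_predT iter_addr_0 mulr_natl.
have -> : \sum_(k < r) \sum_(l < r) (Q * Q + Q) * H (C3 k l)
          = (Q * Q + Q) * \sum_(p <- s) zeta_sum r p.1 * zeta_sum r p.2.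
  under eq_bigr do under eq_bigr do rewrite HC3 mulr_sumr.
  rewrite mulr_sumr; under [RHS]eq_bigr do rewrite big_distrlr mulr_sumr.
  under eq_bigr do rewrite exchange_big; rewrite exchange_big /=.
  by apply: eq_bigr => p _; apply: eq_bigr => k _; rewrite mulr_sumr.
ring.
Qed.

Definition U_class (a : nat) (cl : gl2class) : algC :=
  match cl with
  | C1 k => alpha F a (2 * k) | C2 k => alpha F a (2 * k)
  | C3 k l => alpha F a (k + l) | C4 m => alpha F a m end.

Definition V_class (a : nat) (cl : gl2class) : algC :=
  match cl with
  | C1 k => (qq F)%:R * alpha F a (2 * k) | C2 k => 0
  | C3 k l => alpha F a (k + l) | C4 m => - alpha F a m end.

Definition W_class (a b : nat) (cl : gl2class) : algC :=
  match cl with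
  | C1 k => (ss F)%:R * alpha F (a + b) k | C2 k => alpha F (a + b) k
  | C3 k l => alpha F a k * alpha F b l + alpha F a l * alpha F b k
  | C4 _ => 0 end.

Definition X_class (n : nat) (cl : gl2class) : algC :=
  match cl with
  | C1 k => r%:R * alpha F (n %% r) k | C2 k => - alpha F (n %% r) k
  | C3 k l => 0 | C4 m => - (phi F n m + phi F n (qq F * m)) end.

Lemma U_class_sym a : C3_symmetric (U_class a). Proof. by move=> k l /=; rewrite addnC. Qed.
Lemma V_class_sym a : C3_symmetric (V_class a). Proof. by move=> k l /=; rewrite addnC. Qed.
Lemma W_class_sym a b : C3_symmetric (W_class a b). Proof. by move=> k l /=; rewrite addrC. Qed.
Lemma X_class_sym n : C3_symmetric (X_class n). Proof. by []. Qed.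

Lemma alpha_double x k : alpha F x (2 * k) = alpha F (2 * x) k.
Proof. by rewrite /alpha mulnCA mulnA. Qed.

Lemma alphaD x k l : alpha F x (k + l) = alpha F x k * alpha F x l.
Proof. by rewrite /alpha mulnDr exprD. Qed.

Lemma conjC_alpha x j : (alpha F x j)^* = alpha F (x * r.-1) j.
Proof. by rewrite /alpha conjC_zetaX // mulnAC. Qed.

Ltac class_prod_monomial :=
  rewrite /class_prod /= ?alpha_double ?alphaD
    ?(rmorphM, rmorphD, rmorphN, rmorph_nat, rmorph0) /= ?conjC_alpha
    ?big_cons ?big_nil /alpha ?mulnDl ?exprD; ring.

Lemma mult_WWU (a b c d a' : nat) :
  mult (chiW iota rho sigma a b) (chiW iota rho sigma c d) (chiU iota rho sigma a') =
    ind ((a + c == a' %[mod r]) && (b + d == a' %[mod r]))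
  + ind ((a + d == a' %[mod r]) && (b + c == a' %[mod r])).
Proof.
rewrite (mult_monomial (f1 := W_class a b) (f2 := W_class c d) (f3 := U_class a')
  (e := (a + b + c + d + 2 * a' * r.-1)%N) (A := (ss F)%:R ^+ 2) (B := 1)
  (s := [:: (a + c + a' * r.-1, b + d + a' * r.-1); (a + d + a' * r.-1, b + c + a' * r.-1);
            (b + c + a' * r.-1, a + d + a' * r.-1); (b + d + a' * r.-1, a + c + a' * r.-1)]%N))
  => //; try solve [exact: W_class_sym | exact: U_class_sym | move=> *; class_prod_monomial
                    | rewrite /=; lia].
rewrite !big_cons big_nil /= !zeta_sum_eqmod // !ind_and natr_rr natr_ss.
by field; rewrite natr_q_neq0 natr_qS_neq0 natr_qB1_neq0.
Qed.

Lemma mult_WWV (a b c d b' : nat) :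
  mult (chiW iota rho sigma a b) (chiW iota rho sigma c d) (chiV iota rho sigma b') =
    ind (a + b + c + d == 2 * b' %[mod r])
  + ind ((a + c == b' %[mod r]) && (b + d == b' %[mod r]))
  + ind ((a + d == b' %[mod r]) && (b + c == b' %[mod r])).
Proof.
rewrite (mult_monomial (f1 := W_class a b) (f2 := W_class c d) (f3 := V_class b')
  (e := (a + b + c + d + 2 * b' * r.-1)%N) (A := (ss F)%:R ^+ 2 * (qq F)%:R) (B := 0)
  (s := [:: (a + c + b' * r.-1, b + d + b' * r.-1); (a + d + b' * r.-1, b + c + b' * r.-1);
            (b + c + b' * r.-1, a + d + b' * r.-1); (b + d + b' * r.-1, a + c + b' * r.-1)]%N))
  => //; try solve [exact: W_class_sym | exact: V_class_sym | move=> *; class_prod_monomial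
                    | rewrite /=; lia].
rewrite !big_cons big_nil /= !zeta_sum_eqmod // !ind_and natr_rr natr_ss /qq.
by field; rewrite natr_q_neq0 natr_qS_neq0 natr_qB1_neq0.
Qed.

Lemma mult_WWW (a b c d c' d' : nat) :
  mult (chiW iota rho sigma a b) (chiW iota rho sigma c d) (chiW iota rho sigma c' d') =
    ind (a + b + c + d == c' + d' %[mod r])
  + ind ((a + c == c' %[mod r]) && (b + d == d' %[mod r]))
  + ind ((a + c == d' %[mod r]) && (b + d == c' %[mod r]))
  + ind ((a + d == c' %[mod r]) && (b + c == d' %[mod r]))
  + ind ((a + d == d' %[mod r]) && (b + c == c' %[mod r])).
Proof.
rewrite (mult_monomial (f1 := W_class a b) (f2 := W_class c d) (f3 := W_class c' d')
  (e := (a + b + c + d + (c' + d') * r.-1)%N) (A := (ss F)%:R ^+ 3) (B := 1)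
  (s := [:: (a + c + c' * r.-1, b + d + d' * r.-1); (a + c + d' * r.-1, b + d + c' * r.-1);
            (a + d + c' * r.-1, b + c + d' * r.-1); (a + d + d' * r.-1, b + c + c' * r.-1);
            (b + c + c' * r.-1, a + d + d' * r.-1); (b + c + d' * r.-1, a + d + c' * r.-1);
            (b + d + c' * r.-1, a + c + d' * r.-1); (b + d + d' * r.-1, a + c + c' * r.-1)]%N))
  => //; try solve [exact: W_class_sym | move=> *; class_prod_monomial | rewrite /=; lia].
rewrite !big_cons big_nil /= !zeta_sum_eqmod // !ind_and natr_rr natr_ss.
by field; rewrite natr_q_neq0 natr_qS_neq0 natr_qB1_neq0.
Qed.

Lemma mult_WWX (a b c d n : nat) :
  mult (chiW iota rho sigma a b) (chiW iota rho sigma c d) (chiX iota rho sigma n) =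
    ind (a + b + c + d == n %[mod r]).
Proof.
rewrite (mult_monomial (f1 := W_class a b) (f2 := W_class c d) (f3 := X_class n)
  (e := (a + b + c + d + n %% r * r.-1)%N) (A := (ss F)%:R ^+ 2 * r%:R) (B := -1) (s := [::]))
  => //; try solve [exact: W_class_sym | exact: X_class_sym | move=> *; class_prod_monomial].
rewrite big_nil /= zeta_sum_eqmod // modn_mod natr_rr natr_ss.
by field; rewrite natr_q_neq0 natr_qS_neq0 natr_qB1_neq0.
Qed.

End Multiplicities.

Theorem lemmaA3 (F L : finFieldType) (iota : {rmorphism F -> L})
    (rho : F) (sigma : L)
    (hL : #|L| = (#|F| ^ 2)%N)
    (hrho : (rr F).-primitive_root rho)
    (hsigma : (rr F * ss F)%N.-primitive_root sigma)
    (hsr : sigma ^+ ss F = iota rho)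
    (a b c d : 'I_(rr F)) (hab : a != b) (hcd : c != d) :
  let W1 := chiW iota rho sigma a b in
  let W2 := chiW iota rho sigma c d in
  (forall a' : 'I_(rr F),
     mult W1 W2 (chiU iota rho sigma a') =
       ind ((a + c == a' %[mod rr F]) && (b + d == a' %[mod rr F]))%N
     + ind ((a + d == a' %[mod rr F]) && (b + c == a' %[mod rr F]))%N)
  /\ (forall b' : 'I_(rr F),
     mult W1 W2 (chiV iota rho sigma b') =
       ind (a + b + c + d == 2 * b' %[mod rr F])%N
     + ind ((a + c == b' %[mod rr F]) && (b + d == b' %[mod rr F]))%N
     + ind ((a + d == b' %[mod rr F]) && (b + c == b' %[mod rr F]))%N)
  /\ (forall c' d' : 'I_(rr F), c' != d' ->
     mult W1 W2 (chiW iota rho sigma c' d') =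
       ind (a + b + c + d == c' + d' %[mod rr F])%N
     + ind ((a + c == c' %[mod rr F]) && (b + d == d' %[mod rr F]))%N
     + ind ((a + c == d' %[mod rr F]) && (b + d == c' %[mod rr F]))%N
     + ind ((a + d == c' %[mod rr F]) && (b + c == d' %[mod rr F]))%N
     + ind ((a + d == d' %[mod rr F]) && (b + c == c' %[mod rr F]))%N)
  /\ (forall n' : 'I_(rr F * ss F), (n' %% ss F != 0)%N ->
     mult W1 W2 (chiX iota rho sigma n') =
       ind (a + b + c + d == n' %[mod rr F])%N).
Proof.
move=> W1 W2.
have r_gt1 : (1 < rr F)%N.
  rewrite ltnNge; apply: contra hab => r_le1; apply/eqP/val_inj => /=.
  by move: (ltn_ord a) (ltn_ord b); lia.
split; first by move=> a'; exact: (mult_WWU iota sigma hrho r_gt1).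
split; first by move=> b'; exact: (mult_WWV iota sigma hrho r_gt1).
split; first by move=> c' d' _; exact: (mult_WWW iota sigma hrho r_gt1).
by move=> n' _; exact: (mult_WWX iota sigma hrho r_gt1).
Qed.
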